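(* Let $K\subseteq V$ be a regular closed convex cone and $e\in\operatorname{int}(K)$. If $|||\cdot|||=\|\cdot\|_e$, then for all $L\in\mathrm{Gr}(V,m)$ $$\nu(L)=\min_{u\in\Delta(K^* )}\max_{x\in L,\|x\|\le1}\langle x,u\rangle=\max_{x\in L,\|x\|\le1}\min_{u\in\Delta(K^* )}\langle x,u\rangle=\max_{x\in L,\|x\|\le1}\lambda_e(x).$$
   Context: $V$ is a finite-dimensional real vector space with inner product $\langle\cdot,\cdot\rangle$; $K^*:=\{u:\langle u,x\rangle\ge0\ \forall x\in K\}$; $L^\perp$ is the orthogonal complement; $\mathrm{Gr}(V,m)$ is the set of $m$-dimensional subspaces ($1\le m<\dim V$). $\|\cdot\|$ is an arbitrary norm on $V$ with dual norm $\|u\|^*:=\max_{\|x\|=1}\langle u,x\rangle$. The norm induced by $(K,e)$ is $\|x\|_e:=\min\{\alpha\ge0: x+\alpha e\in K,\ -x+\alpha e\in K\}$, with dual norm $\|u\|_e^*:=\max_{\|x\|_e=1}\langle u,x\rangle$ (which equals $\langle u,e\rangle$ for $u\in K^*$). $\Delta(K^* ):=\{u\in K^*:\langle u,e\rangle=1\}$. The eigenvalue map is $\lambda_e(x):=\max\{t\in\mathbb R: x-te\in K\}$. With $|||\cdot|||$ a norm on $V$ with dual norm $|||\cdot|||^*$, $\nu(L):=\min\{\|y-u\|^*:u\in K^*,y\in L^\perp,|||u|||^*=1\}$. *)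

From mathcomp Require Import ssreflect ssrfun ssrbool eqtype ssrnat seq fintype bigop.
From Stdlib Require Import Reals.
Open Scope R_scope.

Definition vec (n : nat) := 'I_n -> R.

Definition vzero {n} : vec n := fun _ => 0.
Definition vadd {n} (x y : vec n) : vec n := fun i => x i + y i.
Definition vopp {n} (x : vec n) : vec n := fun i => - x i.
Definition vsub {n} (x y : vec n) : vec n := fun i => x i - y i.
Definition vscale {n} (a : R) (x : vec n) : vec n := fun i => a * x i.
Definition veq {n} (x y : vec n) : Prop := forall i, x i = y i.

Definition inner {n} (x y : vec n) : R := \big[Rplus/0]_(i < n) (x i * y i).

Definition lincomb {n m} (c : 'I_m -> R) (b : 'I_m -> vec n) : vec n :=
  fun i => \big[Rplus/0]_(j < m) (c j * b j i).

Definition IsMin (S : R -> Prop) (v : R) : Prop := S v /\ forall w, S w -> v <= w.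
Definition IsMax (S : R -> Prop) (v : R) : Prop := S v /\ forall w, S w -> w <= v.

Record IsNorm {n} (N : vec n -> R) : Prop := {
  norm_def : forall x, N x = 0 <-> veq x vzero;
  norm_hom : forall a x, N (vscale a x) = Rabs a * N x;
  norm_tri : forall x y, N (vadd x y) <= N x + N y }.

Definition dual_norm_is {n} (N : vec n -> R) (u : vec n) (t : R) : Prop :=
  IsMax (fun s => exists x, N x = 1 /\ s = inner u x) t.

Definition is_closed {n} (K : vec n -> Prop) : Prop :=
  forall (s : nat -> vec n) (x : vec n),
    (forall k, K (s k)) -> (forall i, Un_cv (fun k => s k i) (x i)) -> K x.

Definition is_convex_cone {n} (K : vec n -> Prop) : Prop :=
  K vzero /\
  (forall x y, K x -> K y -> K (vadd x y)) /\
  (forall a x, 0 <= a -> K x -> K (vscale a x)).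

Definition in_interior {n} (K : vec n -> Prop) (e : vec n) : Prop :=
  exists eps, 0 < eps /\ forall y, inner (vsub y e) (vsub y e) < eps * eps -> K y.

Definition is_pointed {n} (K : vec n -> Prop) : Prop :=
  forall x, K x -> K (vopp x) -> veq x vzero.

Definition regular_closed_convex_cone {n} (K : vec n -> Prop) : Prop :=
  is_closed K /\ is_convex_cone K /\ is_pointed K /\ exists e, in_interior K e.

Definition dual_cone {n} (K : vec n -> Prop) : vec n -> Prop :=
  fun u => forall x, K x -> 0 <= inner u x.

Definition DeltaK {n} (K : vec n -> Prop) (e : vec n) : vec n -> Prop :=
  fun u => dual_cone K u /\ inner u e = 1.

Definition enorm_is {n} (K : vec n -> Prop) (e x : vec n) (t : R) : Prop :=
  IsMin (fun a => 0 <= a /\ K (vadd x (vscale a e)) /\ K (vadd (vopp x) (vscale a e))) t.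

Definition dual_enorm_is {n} (K : vec n -> Prop) (e u : vec n) (t : R) : Prop :=
  IsMax (fun s => exists x, enorm_is K e x 1 /\ s = inner u x) t.

Definition lambda_is {n} (K : vec n -> Prop) (e x : vec n) (t : R) : Prop :=
  IsMax (fun s => K (vsub x (vscale s e))) t.

Definition lin_indep {n m} (b : 'I_m -> vec n) : Prop :=
  forall c : 'I_m -> R, veq (lincomb c b) vzero -> forall j, c j = 0.

Definition in_Gr {n} (m : nat) (L : vec n -> Prop) : Prop :=
  exists b : 'I_m -> vec n, lin_indep b /\
    forall x, L x <-> exists c : 'I_m -> R, veq x (lincomb c b).

Definition orth {n} (L : vec n -> Prop) : vec n -> Prop :=
  fun y => forall x, L x -> inner y x = 0.

(* nu(L) with |||.||| = ||.||_e :
   the set {dual norm of (y-u) : u in K^*, y in L^perp, dual e-norm of u = 1} *)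
Definition nu_set {n} (N : vec n -> R) (K : vec n -> Prop) (e : vec n)
    (L : vec n -> Prop) : R -> Prop :=
  fun t => exists u y, dual_cone K u /\ orth L y /\ dual_enorm_is K e u 1 /\
    dual_norm_is N (vsub y u) t.

(* Let v be the largest value of lambda_e on the unit ball of L; it is attained, by compactness
   (L is finite dimensional and K is closed).  Weak duality is immediate: if x - t e lies in K,
   then t <= <u, x> for every u in DeltaK K e.  Conversely, Hahn-Banach on V x V for the
   sublinear map (a, c) |-> v ||c|| - lambda_e(a), which is nonnegative on {(x, x) : x in L},
   produces u in DeltaK K e and w with <w, .> <= v ||.|| that agree on L.  So u attains the
   min-max value v, and y = u - w in L^perp attains nu(L) = v: for any competitor (u', y'),
   the dual e-norm of u' in the dual cone is <u', e>, and the maximiser x0 gives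
   ||y' - u'||^* >= <u', x0> >= v. *)

From mathcomp Require Import ssreflect ssrfun ssrbool eqtype ssrnat seq fintype bigop.
From mathcomp Require Import ssralg ssrnum normedtype sequences Rstruct Rstruct_topology.
From Stdlib Require Import Reals Lra FunctionalExtensionality Classical ClassicalEpsilon.
Set Implicit Arguments.
Unset Strict Implicit.
Open Scope R_scope.

Ltac vec_field :=
  apply: functional_extensionality => ?; cbv beta delta [vadd vsub vopp vscale vzero]; field; try lra.

Definition unitv {d} (i : 'I_d) : vec d := fun j => if j == i then 1 else 0.

Lemma IsMax_unique (S : R -> Prop) a c : IsMax S a -> IsMax S c -> a = c.
Proof. by move=> [ha hA] [hc hC]; apply: Rle_antisym; [exact: hC | exact: hA]. Qed.

Lemma Rabs_sum m (F : 'I_m -> R) :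
  Rabs (\big[Rplus/0]_(j < m) F j) <= \big[Rplus/0]_(j < m) Rabs (F j).
Proof.
elim/big_rec2: _ => [|j s t _ hst]; first by rewrite Rabs_R0; lra.
by have := Rabs_triang (F j) t; lra.
Qed.

Lemma Rle_sum m (F G : 'I_m -> R) :
  (forall j, F j <= G j) -> \big[Rplus/0]_(j < m) F j <= \big[Rplus/0]_(j < m) G j.
Proof. by move=> hFG; elim/big_rec2: _ => [|j s t _ hst]; [lra | have := hFG j; lra]. Qed.

Section Vectors.
Variable n : nat.
Implicit Types a b z : vec n.

Lemma veqE a b : veq a b -> a = b.
Proof. exact: functional_extensionality. Qed.

Lemma inner_sym a b : inner a b = inner b a.
Proof. by apply: eq_bigr => i _; rewrite Rmult_comm. Qed.

Lemma inner_addl a b z : inner (vadd a b) z = inner a z + inner b z.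
Proof. by rewrite /inner -big_split; apply: eq_bigr => i _; rewrite Rmult_plus_distr_r. Qed.

Lemma inner_scalel r a z : inner (vscale r a) z = r * inner a z.
Proof. by rewrite /inner big_distrr; apply: eq_bigr => i _; rewrite /vscale Rmult_assoc. Qed.

Lemma inner_oppl a z : inner (vopp a) z = - inner a z.
Proof.
have -> : vopp a = vscale (-1) a by vec_field.
by rewrite inner_scalel; ring.
Qed.

Lemma inner_subl a b z : inner (vsub a b) z = inner a z - inner b z.
Proof.
have -> : vsub a b = vadd a (vopp b) by vec_field.
by rewrite inner_addl inner_oppl.
Qed.

Lemma inner_addr a b z : inner z (vadd a b) = inner z a + inner z b.
Proof. by rewrite !(inner_sym z) inner_addl. Qed.

Lemma inner_scaler r a z : inner z (vscale r a) = r * inner z a.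
Proof. by rewrite !(inner_sym z) inner_scalel. Qed.

Lemma inner_oppr a z : inner z (vopp a) = - inner z a.
Proof. by rewrite !(inner_sym z) inner_oppl. Qed.

Lemma inner_subr a b z : inner z (vsub a b) = inner z a - inner z b.
Proof. by rewrite !(inner_sym z) inner_subl. Qed.

Lemma inner0l z : inner vzero z = 0.
Proof. by rewrite /inner big1 // => i _; rewrite /vzero Rmult_0_l. Qed.

Lemma inner0r z : inner z vzero = 0.
Proof. by rewrite inner_sym inner0l. Qed.

Lemma sqr_le_inner z j : z j * z j <= inner z z.
Proof.
rewrite /inner (bigD1 j) //= -[X in X <= _]Rplus_0_r; apply: Rplus_le_compat_l.
by elim/big_rec: _ => [|i x _]; [lra | have := Rle_0_sqr (z i); rewrite /Rsqr; lra].
Qed.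

Lemma inner_ge0 z : 0 <= inner z z.
Proof. by rewrite /inner; elim/big_rec: _ => [|i x _]; [lra | have := Rle_0_sqr (z i); rewrite /Rsqr; lra]. Qed.

Lemma inner_unitv (i : 'I_n) : inner (unitv i) (unitv i) = 1.
Proof.
rewrite /inner (bigD1 i) //= /unitv eqxx big1 => [|j /negbTE ->]; ring.
Qed.

End Vectors.

Definition increasing (phi : nat -> nat) : Prop := forall k, (phi k < phi k.+1)%nat.

Lemma increasing_ge phi : increasing phi -> forall k, (k <= phi k)%nat.
Proof. by move=> hphi; elim=> // k IH; exact: leq_ltn_trans IH (hphi k). Qed.

Lemma increasing_comp phi psi : increasing phi -> increasing psi -> increasing (phi \o psi).
Proof.
move=> hphi hpsi k; rewrite /=; elim: (psi k.+1) (hpsi k) => // j IH.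
rewrite ltnS leq_eqVlt => /orP [/eqP <- | /IH]; first exact: hphi.
by move/ltn_trans; apply; exact: hphi.
Qed.

Lemma Un_cv_const c : Un_cv (fun _ => c) c.
Proof. by move=> eps heps; exists 0%nat => k _; rewrite /R_dist Rminus_diag Rabs_R0. Qed.

Lemma Un_cv_subseq u l phi : increasing phi -> Un_cv u l -> Un_cv (u \o phi) l.
Proof.
move=> hphi hu eps /hu [k0 hk0]; exists k0 => k /leP hk; apply: hk0.
by apply/leP; exact: leq_trans hk (increasing_ge hphi k).
Qed.

Lemma Un_cv_big (J : Type) (r : seq J) (F : nat -> J -> R) (G : J -> R) :
  (forall j, Un_cv (fun k => F k j) (G j)) ->
  Un_cv (fun k => \big[Rplus/0]_(j <- r) F k j) (\big[Rplus/0]_(j <- r) G j).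
Proof.
move=> h; elim: r => [|j r IH].
  by rewrite big_nil; apply: Un_cv_ext (Un_cv_const 0) => k; rewrite big_nil.
by rewrite big_cons; apply: Un_cv_ext (CV_plus _ _ _ _ (h j) IH) => k; rewrite big_cons.
Qed.

Lemma Un_cv_dominated (u w : nat -> R) (l : R) :
  (forall k, Rabs (u k - l) <= w k) -> Un_cv w 0 -> Un_cv u l.
Proof.
move=> huw hw eps /hw [k0 hk0]; exists k0 => k /hk0; rewrite /R_dist Rminus_0_r.
by have := huw k; have := Rle_abs (w k); lra.
Qed.

Lemma Un_cv_inv_subseq phi : increasing phi -> Un_cv (fun k => / INR (phi k).+1) 0.
Proof.
move=> hphi; apply: (Un_cv_subseq (u := fun k => / INR k.+1)) => //.
move=> eps heps; have [k0 [hk0 hpos]] := archimed_cor1 eps heps.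
exists k0 => k /leP hk; rewrite /R_dist Rminus_0_r Rabs_right.
  apply: Rle_lt_trans hk0; apply: Rinv_le_contravar; first exact: lt_0_INR.
  by apply: le_INR; apply/leP; exact: leq_trans hk (leqnSn k).
by apply: Rle_ge; apply: Rlt_le; apply: Rinv_0_lt_compat; apply: lt_0_INR; apply/ltP.
Qed.

Lemma bolzano_weierstrass_R (u : nat -> R) (M : R) : (forall k, Rabs (u k) <= M) ->
  exists phi l, increasing phi /\ Un_cv (u \o phi) l.
Proof.
move=> hM; have [|phi phi_incr /filter.cvg_ex[l phi_cvg]] := bolzano_weierstrass (u_ := u).
  exists M; split; first exact: Num.Theory.num_real.
  move=> r /RltP hr x _; apply/RleP; have := hM x.
  change (Rabs (u x) <= M -> Rabs (u x) <= r); lra.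
exists phi, l; split.
  move=> k; have := phi_incr k.+1 k; change ((phi k.+1 <= phi k)%nat = (k < k)%nat -> (phi k < phi k.+1)%nat).
  by rewrite ltnn ltnNge => ->.
move=> eps /RltP heps.
have [k0 _ hk0] := (@cvgrPdist_lt R R^o nat _ _ (u \o phi) l).1 phi_cvg _ heps.
exists k0 => k /leP hk; rewrite /R_dist Rabs_minus_sym; exact/RltP/hk0.
Qed.

Lemma bolzano_weierstrass_vec d (s : nat -> vec d) (M : R) : (forall k i, Rabs (s k i) <= M) ->
  exists phi (l : vec d), increasing phi /\ forall i, Un_cv (fun k => s (phi k) i) (l i).
Proof.
move=> hM.
suff [phi [hphi /choice [l hl]]] : exists phi, increasing phi /\
    forall i, exists li, Un_cv (fun k => s (phi k) i) li by exists phi, l.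
suff [phi [hphi hr]] : exists phi, increasing phi /\
    forall i, i \in enum 'I_d -> exists li, Un_cv (fun k => s (phi k) i) li.
  by exists phi; split => // i; apply: hr; rewrite mem_enum.
elim: (enum 'I_d) => [|i r [phi [hphi hr]]]; first by exists (@id nat); split => // k; exact: ltnSn.
have [psi [li [hpsi hli]]] := bolzano_weierstrass_R (fun k => hM (phi k) i).
exists (phi \o psi); split; first exact: increasing_comp.
move=> j; rewrite in_cons => /orP [/eqP -> | /hr [lj hlj]]; first by exists li.
by exists lj; exact: Un_cv_subseq hlj.
Qed.

Section LinearCombinations.
Variables (n m : nat) (b : 'I_m -> vec n).
Implicit Types c : vec m.

Lemma lincomb_bigv c : lincomb c b = \big[vadd/vzero]_(j < m) vscale (c j) (b j).
Proof. by apply: functional_extensionality => i; rewrite (big_morph (fun v => v i) (id1 := 0) (op1 := Rplus)) //. Qed.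

Lemma lincomb_add c1 c2 : lincomb (vadd c1 c2) b = vadd (lincomb c1 b) (lincomb c2 b).
Proof.
apply: functional_extensionality => i; rewrite /lincomb /vadd -big_split.
by apply: eq_bigr => j _; rewrite Rmult_plus_distr_r.
Qed.

Lemma lincomb_scale r c : lincomb (vscale r c) b = vscale r (lincomb c b).
Proof.
apply: functional_extensionality => i; rewrite /lincomb /vscale big_distrr.
by apply: eq_bigr => j _; rewrite Rmult_assoc.
Qed.

Lemma lincomb0 : lincomb vzero b = vzero.
Proof. by apply: functional_extensionality => i; rewrite /lincomb big1 // => j _; rewrite Rmult_0_l. Qed.

Lemma lincomb_cv (cs : nat -> vec m) (l : vec m) :
  (forall j, Un_cv (fun k => cs k j) (l j)) ->
  forall i, Un_cv (fun k => lincomb (cs k) b i) (lincomb l b i).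
Proof. by move=> h i; apply: Un_cv_big => j; apply: CV_mult => //; exact: Un_cv_const. Qed.

End LinearCombinations.

Lemma lincomb_unitv d (z : vec d) : lincomb z unitv = z.
Proof.
apply: functional_extensionality => i; rewrite /lincomb (bigD1 i) //= /unitv eqxx big1.
  by rewrite Rmult_1_r Rplus_0_r.
by move=> j ji; rewrite eq_sym (negbTE ji) Rmult_0_r.
Qed.

Section Norms.
Variables (n : nat) (N : vec n -> R).
Hypothesis hN : IsNorm N.

Lemma norm0 : N vzero = 0.
Proof. exact: (proj2 (norm_def N hN vzero)). Qed.

Lemma norm_eq0 x : N x = 0 -> x = vzero.
Proof. by move/(norm_def N hN)/veqE. Qed.

Lemma normZ r x : N (vscale r x) = Rabs r * N x.
Proof. exact: norm_hom. Qed.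

Lemma norm_opp x : N (vopp x) = N x.
Proof.
have -> : vopp x = vscale (-1) x by vec_field.
by rewrite normZ Rabs_Ropp Rabs_R1 Rmult_1_l.
Qed.

Lemma norm_ge0 x : 0 <= N x.
Proof.
have := norm_tri N hN x (vopp x); rewrite norm_opp.
have -> : vadd x (vopp x) = vzero by vec_field.
by rewrite norm0; lra.
Qed.

Lemma norm_dist_le x y : Rabs (N x - N y) <= N (vsub x y).
Proof.
have hx := norm_tri N hN (vsub x y) y; have hy := norm_tri N hN (vopp (vsub x y)) x.
have ex : vadd (vsub x y) y = x by vec_field.
have ey : vadd (vopp (vsub x y)) x = y by vec_field.
by rewrite ex in hx; rewrite ey norm_opp in hy; apply: Rabs_le; lra.
Qed.

Lemma norm_lincomb_le m (b : 'I_m -> vec n) c :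
  N (lincomb c b) <= \big[Rplus/0]_(j < m) (Rabs (c j) * N (b j)).
Proof.
rewrite lincomb_bigv; elim/big_rec2: _ => [|j y x _ hx]; first by rewrite norm0; lra.
by have := norm_tri N hN (vscale (c j) (b j)) x; rewrite normZ; lra.
Qed.

Lemma norm_continuous (s : nat -> vec n) (l : vec n) :
  (forall i, Un_cv (fun k => s k i) (l i)) -> Un_cv (fun k => N (s k)) (N l).
Proof.
move=> hs.
have hbound : Un_cv (fun k => \big[Rplus/0]_(i < n) (Rabs (vsub (s k) l i) * N (unitv i)))
    (\big[Rplus/0]_(i < n) (0 * N (unitv i))).
  apply: Un_cv_big => i; apply: CV_mult; last exact: Un_cv_const.
  move=> eps /(hs i) [k0 hk0]; exists k0 => k /hk0.
  by rewrite /R_dist /vsub Rminus_0_r Rabs_Rabsolu.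
rewrite big1 in hbound; last by move=> i _; rewrite Rmult_0_l.
move=> eps /hbound [k0 hk0]; exists k0 => k /hk0; rewrite /R_dist Rminus_0_r.
have := norm_dist_le (s k) l; rewrite -{1}(lincomb_unitv (vsub (s k) l)).
have := norm_lincomb_le unitv (vsub (s k) l).
move: (\big[Rplus/0]_(i < n) _) => g h1 h2 h3; have := Rle_abs g; lra.
Qed.

Lemma norm1_exists (i0 : 'I_n) : exists x, N x = 1.
Proof.
have hpos : 0 < N (unitv i0).
  have [//|h0] := Rle_lt_or_eq_dec _ _ (norm_ge0 (unitv i0)).
  by have := congr1 (fun v => v i0) (norm_eq0 (esym h0)); rewrite /unitv /vzero eqxx; lra.
exists (vscale (/ N (unitv i0)) (unitv i0)); rewrite normZ Rabs_right; first by field; lra.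
by apply: Rle_ge; apply: Rlt_le; apply: Rinv_0_lt_compat.
Qed.

Lemma dual_norm_ge0 z t : dual_norm_is N z t -> 0 <= t.
Proof.
move=> [[x [hx ->]] hmax]; have hx' : N (vopp x) = 1 by rewrite norm_opp.
by have := hmax _ (ex_intro _ _ (conj hx' erefl)); rewrite inner_oppr; lra.
Qed.

Lemma dual_norm_bound z t x : dual_norm_is N z t -> inner z x <= t * N x.
Proof.
move=> [_ hmax]; have [hNx | hNx] := Rle_lt_or_eq_dec _ _ (norm_ge0 x); last first.
  by rewrite -hNx (norm_eq0 (esym hNx)) inner0r Rmult_0_r; lra.
have hinv := Rinv_0_lt_compat _ hNx.
have : inner z (vscale (/ N x) x) <= t.
  apply: hmax; exists (vscale (/ N x) x); split => //.
  by rewrite normZ Rabs_right; [field; lra | lra].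
by rewrite inner_scaler => h; have := Rmult_le_compat_r (N x) _ _ (Rlt_le _ _ hNx) h;
  rewrite Rmult_comm -Rmult_assoc Rinv_r; lra.
Qed.

Lemma dual_norm_of_bound z t x1 :
  (forall x, inner z x <= t * N x) -> N x1 = 1 -> inner z x1 = t -> dual_norm_is N z t.
Proof.
move=> hz hx1 hzx1; split; first by exists x1.
by move=> s [x [hx ->]]; have := hz x; rewrite hx; lra.
Qed.

End Norms.

Lemma norm_lincomb_isnorm n m (N : vec n -> R) (b : 'I_m -> vec n) :
  IsNorm N -> lin_indep b -> IsNorm (fun c => N (lincomb c b)).
Proof.
move=> hN hb; split.
- move=> c; split=> [/(norm_eq0 hN) hc j | /veqE ->]; last by rewrite lincomb0 norm0.
  by apply: hb => i; rewrite hc.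
- by move=> r c; rewrite lincomb_scale normZ.
- by move=> c1 c2; rewrite lincomb_add; exact: norm_tri.
Qed.

Section CoordinateBounds.
Variables (d : nat) (N : vec d -> R).
Hypothesis hN : IsNorm N.

Lemma norm_sphere_lower_bound : exists al, 0 < al /\ forall c, inner c c = 1 -> al <= N c.
Proof.
apply: NNPP => hno.
have /choice [cs hcs] : forall k : nat, exists c, inner c c = 1 /\ N c < / INR k.+1.
  move=> k; apply: NNPP => hk; apply: hno; exists (/ INR k.+1); split.
    by apply: Rinv_0_lt_compat; apply: lt_0_INR; apply/ltP.
  by move=> c hc; apply: Rnot_lt_le => hlt; apply: hk; exists c.
have hbd k j : Rabs (cs k j) <= 1.
  rewrite -Rabs_R1; apply: Rsqr_le_abs_0; rewrite /Rsqr; have := sqr_le_inner (cs k) j.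
  by rewrite (proj1 (hcs k)); lra.
have [phi [c0 [hphi hcv]]] := bolzano_weierstrass_vec hbd.
have hc0 : inner c0 c0 = 1.
  apply: UL_sequence (Un_cv_big _ (fun j => CV_mult _ _ _ _ (hcv j) (hcv j))) _.
  by apply: Un_cv_ext (Un_cv_const 1) => k; rewrite -(proj1 (hcs (phi k))).
have hN0 : N c0 = 0.
  apply: UL_sequence (norm_continuous hN hcv) _.
  apply: Un_cv_dominated (Un_cv_inv_subseq hphi) => k.
  by rewrite Rminus_0_r Rabs_right; [exact: Rlt_le (proj2 (hcs (phi k))) | exact/Rle_ge/norm_ge0].
by move: hc0; rewrite (norm_eq0 hN hN0) inner0l; lra.
Qed.

Lemma norm_coord_lower_bound : exists al, 0 < al /\ forall c j, al * Rabs (c j) <= N c.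
Proof.
have [al [hal hsphere]] := norm_sphere_lower_bound.
exists al; split => // c j.
have [hc0 | hcpos] := Req_dec (inner c c) 0.
  have -> : c j = 0 by have := sqr_le_inner c j; have := Rle_0_sqr (c j); rewrite /Rsqr; nra.
  by rewrite Rabs_R0 Rmult_0_r; exact: norm_ge0.
set s := sqrt (inner c c).
have hs : 0 < s by apply: sqrt_lt_R0; have := inner_ge0 c; lra.
have hss : s * s = inner c c := sqrt_sqrt _ (inner_ge0 c).
have hcj : Rabs (c j) <= s.
  rewrite -(Rabs_right s); last lra.
  by apply: Rsqr_le_abs_0; rewrite /Rsqr hss; exact: sqr_le_inner.
have hunit : inner (vscale (/ s) c) (vscale (/ s) c) = 1.
  by rewrite inner_scalel inner_scaler -hss; field; lra.
have := hsphere _ hunit; rewrite (normZ hN) Rabs_right; last first.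
  by apply: Rle_ge; apply: Rlt_le; apply: Rinv_0_lt_compat.
move=> h; have hNc : al * s <= N c.
  by have := Rmult_le_compat_l s _ _ (Rlt_le _ _ hs) h; rewrite -Rmult_assoc Rinv_r; lra.
by have := Rabs_pos (c j); nra.
Qed.

End CoordinateBounds.

Lemma sup_attained m (S : vec m -> R -> Prop) (B T : R) :
  (forall c t, S c t -> (forall j, Rabs (c j) <= B) /\ t <= T) ->
  (exists c t, S c t) ->
  (forall cs ts c t, (forall k, S (cs k) (ts k)) ->
     (forall j, Un_cv (fun k => cs k j) (c j)) -> Un_cv ts t -> S c t) ->
  exists c0 v, S c0 v /\ forall c t, S c t -> t <= v.
Proof.
move=> hbd [c1 [t1 hS1]] hclosed.
have [v [hv_ub hv_least]] : {v | is_lub (fun t => exists c, S c t) v}.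
  by apply: completeness; [exists T => t [c /hbd []] | exists t1, c1].
have /choice [ct hct] : forall k : nat, exists ct : vec m * R, S ct.1 ct.2 /\ v - / INR k.+1 < ct.2.
  move=> k; apply: NNPP => hno.
  have : 0 < / INR k.+1 by apply: Rinv_0_lt_compat; apply: lt_0_INR; apply/ltP.
  suff : v <= v - / INR k.+1 by lra.
  by apply: hv_least => t [c hc]; apply: Rnot_lt_le => ht; apply: hno; exists (c, t).
have [phi [c0 [hphi hcv]]] := bolzano_weierstrass_vec (fun k => proj1 (hbd _ _ (proj1 (hct k)))).
exists c0, v; split; last by move=> c t hc; apply: hv_ub; exists c.
apply: (hclosed (fun k => (ct (phi k)).1) (fun k => (ct (phi k)).2)) => //.
  by move=> k; exact: (proj1 (hct (phi k))).
apply: Un_cv_dominated (Un_cv_inv_subseq hphi) => k.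
have [hS hlow] := hct (phi k); have := hv_ub _ (ex_intro _ _ hS).
by move=> hup; rewrite Rabs_left1; lra.
Qed.

Definition sublinear {d} (p : vec d -> R) : Prop :=
  (forall a b, p (vadd a b) <= p a + p b) /\ (forall r a, 0 < r -> p (vscale r a) = r * p a).

Definition subspace {d} (M : vec d -> Prop) : Prop :=
  M vzero /\ (forall a b, M a -> M b -> M (vadd a b)) /\ (forall r a, M a -> M (vscale r a)).

Definition linear_on {d} (M : vec d -> Prop) (f : vec d -> R) : Prop :=
  (forall a b, M a -> M b -> f (vadd a b) = f a + f b) /\
  (forall r a, M a -> f (vscale r a) = r * f a).

Lemma linear_on_lincomb d m (M : vec d -> Prop) f (b : 'I_m -> vec d) c :
  subspace M -> linear_on M f -> (forall j, M (b j)) ->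
  M (lincomb c b) /\ f (lincomb c b) = \big[Rplus/0]_(j < m) (c j * f (b j)).
Proof.
move=> [M0 [Madd Mscale]] [fadd fscale] hb; rewrite lincomb_bigv.
elim/big_rec2: _ => [|j s x _ [hx <-]].
  split => //; have -> : vzero = vscale 0 (vzero : vec d) by vec_field.
  by rewrite fscale //; ring.
split; first by apply: Madd => //; exact: Mscale.
by rewrite fadd ?fscale //; exact: Mscale.
Qed.

Section HahnBanach.
Variables (d : nat) (p : vec d -> R).
Hypothesis hp : sublinear p.

Definition dominated (M : vec d -> Prop) (f : vec d -> R) : Prop := forall z, M z -> f z <= p z.

Record extension (M : vec d -> Prop) (f : vec d -> R) (M' : vec d -> Prop) (f' : vec d -> R) :
  Prop := {
  ext_subspace : subspace M';
  ext_linear : linear_on M' f';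
  ext_dominated : dominated M' f';
  ext_incl : forall z, M z -> M' z /\ f' z = f z }.

Lemma extension_trans M f M1 f1 M2 f2 :
  extension M f M1 f1 -> extension M1 f1 M2 f2 -> extension M f M2 f2.
Proof.
move=> [_ _ _ h1] [s2 l2 d2 h2]; split => // z /h1 [/h2 [hz <-] <-]; exact: (conj hz erefl).
Qed.

Lemma extension_refl M f : subspace M -> linear_on M f -> dominated M f -> extension M f M f.
Proof. by move=> hM hf hdom; split. Qed.

Section OneDimension.
Variables (M : vec d -> Prop) (f : vec d -> R) (x : vec d).
Hypotheses (hM : subspace M) (hf : linear_on M f) (hdom : dominated M f).

(* [c] is admissible iff [f' (m + t x) := f m + t c] is dominated by [p] on [M + R x]. *)
Definition admissible (c : R) : Prop :=
  forall m, M m -> f m - p (vsub m x) <= c /\ c <= p (vadd m x) - f m.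

Lemma hb_admissible_exists : exists c, admissible c.
Proof.
have key m1 m2 : M m1 -> M m2 -> f m1 - p (vsub m1 x) <= p (vadd m2 x) - f m2.
  move=> h1 h2; have := hp.1 (vsub m1 x) (vadd m2 x).
  have -> : vadd (vsub m1 x) (vadd m2 x) = vadd m1 m2 by vec_field.
  by have := hdom (hM.2.1 _ _ h1 h2); rewrite hf.1 //; lra.
have [c [hc_ub hc_least]] : {c | is_lub (fun s => exists m, M m /\ s = f m - p (vsub m x)) c}.
  apply: completeness.
    by exists (p (vadd vzero x) - f vzero) => s [m [hm ->]]; exact: key hm hM.1.
  by exists (f vzero - p (vsub vzero x)), vzero; split => //; exact: hM.1.
exists c => m hm; split; first by apply: hc_ub; exists m.
by apply: hc_least => s [m1 [hm1 ->]]; exact: key.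
Qed.

Lemma admissible_dominated c m t :
  admissible c -> M m -> f m + t * c <= p (vadd m (vscale t x)).
Proof.
move=> hc hm.
have [ht | [-> | ht]] := Rtotal_order t 0.
- have hm' := hM.2.2 (/ - t) _ hm.
  have -> : vadd m (vscale t x) = vscale (- t) (vsub (vscale (/ - t) m) x) by vec_field.
  rewrite hp.2; last lra.
  have := (hc _ hm').1; rewrite hf.2 // => h.
  have := Rmult_le_compat_l (- t) _ _ (Rlt_le _ _ (Ropp_0_gt_lt_contravar _ ht)) h.
  by rewrite Rmult_minus_distr_l -Rmult_assoc Rinv_r; lra.
- have -> : vadd m (vscale 0 x) = m by vec_field.
  by rewrite Rmult_0_l Rplus_0_r; exact: hdom.
- have hm' := hM.2.2 (/ t) _ hm.
  have -> : vadd m (vscale t x) = vscale t (vadd (vscale (/ t) m) x) by vec_field.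
  rewrite hp.2 //.
  have := (hc _ hm').2; rewrite hf.2 // => h.
  have := Rmult_le_compat_l t _ _ (Rlt_le _ _ ht) h.
  by rewrite Rmult_minus_distr_l -(Rmult_assoc t) Rinv_r; lra.
Qed.

Hypothesis hx : ~ M x.

Lemma line_decomp_uniq m1 m2 t1 t2 : M m1 -> M m2 ->
  vadd m1 (vscale t1 x) = vadd m2 (vscale t2 x) -> m1 = m2 /\ t1 = t2.
Proof.
move=> h1 h2 heq.
have hcoord i : m1 i + t1 * x i = m2 i + t2 * x i by have := congr1 (fun v => v i) heq.
have ht : t1 = t2.
  apply: NNPP => ht; apply: hx.
  have -> : x = vscale (/ (t1 - t2)) (vadd m2 (vscale (-1) m1)).
    apply: functional_extensionality => i; have := hcoord i; rewrite /vscale /vadd => hi.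
    by field_simplify_eq; lra.
  by apply: hM.2.2; apply: hM.2.1 h2 _; exact: hM.2.2.
by split => //; apply: functional_extensionality => i; have := hcoord i; rewrite ht; lra.
Qed.

Definition line_ext : vec d -> Prop := fun z => exists m t, M m /\ z = vadd m (vscale t x).

Definition line_ext_fun (c : R) : vec d -> R := fun z =>
  let mt := epsilon (inhabits (vzero, 0)) (fun mt => M mt.1 /\ z = vadd mt.1 (vscale mt.2 x)) in
  f mt.1 + mt.2 * c.

Lemma line_ext_funE c m t : M m -> line_ext_fun c (vadd m (vscale t x)) = f m + t * c.
Proof.
move=> hm; rewrite /line_ext_fun; set P := fun mt : vec d * R => _.
have [hm' heq] : P (epsilon (inhabits (vzero, 0)) P) by apply: epsilon_spec; exists (m, t).
by have [<- <-] := line_decomp_uniq hm hm' heq.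
Qed.

Lemma hb_step : exists M' f', extension M f M' f' /\ M' x.
Proof.
have [c hc] := hb_admissible_exists.
have [M0 [Madd Mscale]] := hM; have [fadd fscale] := hf.
exists line_ext, (line_ext_fun c); split; last by exists vzero, 1; split => //; vec_field.
split.
- split; first by exists vzero, 0; split => //; vec_field.
  split.
    move=> _ _ [m1 [t1 [h1 ->]]] [m2 [t2 [h2 ->]]]; exists (vadd m1 m2), (t1 + t2).
    by split; [exact: Madd | vec_field].
  by move=> r _ [m1 [t1 [h1 ->]]]; exists (vscale r m1), (r * t1); split; [exact: Mscale | vec_field].
- split.
    move=> _ _ [m1 [t1 [h1 ->]]] [m2 [t2 [h2 ->]]].
    have -> : vadd (vadd m1 (vscale t1 x)) (vadd m2 (vscale t2 x)) =
      vadd (vadd m1 m2) (vscale (t1 + t2) x) by vec_field.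
    by rewrite !line_ext_funE ?fadd //; [ring | exact: Madd].
  move=> r _ [m1 [t1 [h1 ->]]].
  have -> : vscale r (vadd m1 (vscale t1 x)) = vadd (vscale r m1) (vscale (r * t1) x) by vec_field.
  by rewrite !line_ext_funE ?fscale //; [ring | exact: Mscale].
- by move=> _ [m [t [hm ->]]]; rewrite line_ext_funE //; exact: admissible_dominated.
- move=> z hz; have ez : z = vadd z (vscale 0 x) by vec_field.
  by split; [exists z, 0 | rewrite {1}ez line_ext_funE // Rmult_0_l Rplus_0_r].
Qed.

End OneDimension.

Lemma hb_extend_units M f (r : seq 'I_d) : subspace M -> linear_on M f -> dominated M f ->
  exists M' f', extension M f M' f' /\ forall i, i \in r -> M' (unitv i).
Proof.
elim: r M f => [|i r IH] M f hM hf hdom; first by exists M, f; split => //; exact: extension_refl.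
have [M1 [f1 [ext1 hi1]]] : exists M1 f1, extension M f M1 f1 /\ M1 (unitv i).
  have [hMi | hMi] := classic (M (unitv i)); last exact: hb_step.
  by exists M, f; split => //; exact: extension_refl.
have [M2 [f2 [ext2 hr2]]] := IH M1 f1 (ext_subspace ext1) (ext_linear ext1) (ext_dominated ext1).
exists M2, f2; split; first exact: extension_trans ext1 ext2.
by move=> j; rewrite in_cons => /orP [/eqP -> | /hr2 //]; exact: (ext_incl ext2 hi1).1.
Qed.

Theorem hahn_banach M f : subspace M -> linear_on M f -> dominated M f ->
  exists w, (forall z, inner w z <= p z) /\ (forall z, M z -> inner w z = f z).
Proof.
move=> hM hf hdom.
have [M' [f' [[hM' hf' hdom' hincl] hunits]]] := hb_extend_units (enum 'I_d) hM hf hdom.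
exists (fun i => f' (unitv i)).
have hall z : M' z /\ f' z = inner (fun i => f' (unitv i)) z.
  have := linear_on_lincomb z hM' hf' (fun j => hunits j (mem_enum _ j)).
  rewrite lincomb_unitv => -[hz ->]; split => //.
  by apply: eq_bigr => i _; rewrite Rmult_comm.
split => [z | z hz]; rewrite -(proj2 (hall z)); first exact: hdom' (proj1 (hall z)).
exact: (proj2 (hincl z hz)).
Qed.

End HahnBanach.

(* [V x V] is modelled as [vec (n + n)]. *)
Definition vfst {n} (z : vec (n + n)) : vec n := fun j => z (lshift n j).
Definition vsnd {n} (z : vec (n + n)) : vec n := fun j => z (rshift n j).
Definition vpair {n} (a c : vec n) : vec (n + n) :=
  fun i => match fintype.split i with inl j => a j | inr j => c j end.

Lemma vfst_pair n (a c : vec n) : vfst (vpair a c) = a.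
Proof. by apply: functional_extensionality => j; rewrite /vfst /vpair (unsplitK (inl j)). Qed.

Lemma vsnd_pair n (a c : vec n) : vsnd (vpair a c) = c.
Proof. by apply: functional_extensionality => j; rewrite /vsnd /vpair (unsplitK (inr j)). Qed.

Lemma inner_pair n (w z : vec (n + n)) :
  inner w z = inner (vfst w) (vfst z) + inner (vsnd w) (vsnd z).
Proof. by rewrite /inner big_split_ord. Qed.

(* Total stand-in for [lambda_is], needed to build the sublinear functional of
   [dual_certificate]. *)
Definition lambda_sup {n} (K : vec n -> Prop) (e z : vec n) : R :=
  epsilon (inhabits 0) (is_lub (fun t => K (vsub z (vscale t e)))).

Lemma DeltaK_lambda_le n (K : vec n -> Prop) e u x t :
  DeltaK K e u -> K (vsub x (vscale t e)) -> t <= inner u x.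
Proof. by move=> [hu hue] /hu; rewrite inner_subr inner_scaler hue; lra. Qed.

Section ConeInterior.
Variables (n : nat) (K : vec n -> Prop) (e : vec n) (eps : R) (i0 : 'I_n).
Hypotheses (hKadd : forall x y, K x -> K y -> K (vadd x y))
  (hKscale : forall a x, 0 <= a -> K x -> K (vscale a x)) (hKpointed : is_pointed K)
  (heps : 0 < eps) (hball : forall y, inner (vsub y e) (vsub y e) < eps * eps -> K y).

Lemma cone_e : K e.
Proof.
apply: hball; have -> : vsub e e = vzero by vec_field.
by rewrite inner0l; nra.
Qed.

Lemma cone0 : K vzero.
Proof.
have -> : vzero = vscale 0 e by vec_field.
exact: hKscale (Rle_refl 0) cone_e.
Qed.

(* Pointedness forces [e <> 0]; this is where [V <> 0] (the index [i0]) is used. *)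
Lemma not_cone_neg_e t : 0 < t -> ~ K (vscale (- t) e).
Proof.
move=> ht hKt.
have e0 : e = vzero.
  apply/veqE/hKpointed; first exact: cone_e.
  have -> : vopp e = vscale (/ t) (vscale (- t) e) by vec_field.
  by apply: hKscale hKt; apply: Rlt_le; apply: Rinv_0_lt_compat.
pose y := vscale (eps / 2) (unitv i0).
have hy z : inner z z = inner y y -> K z.
  move=> hz; apply: hball; rewrite e0.
  have -> : vsub z vzero = z by vec_field.
  by rewrite hz /y inner_scalel inner_scaler inner_unitv; nra.
have hyK : K y by exact: hy.
have hyK' : K (vopp y) by apply: hy; rewrite inner_oppl inner_oppr; ring.
by have := hKpointed hyK hyK' i0; rewrite /y /vscale /unitv eqxx /vzero; lra.
Qed.

Lemma cone_absorbs z : K (vsub (vscale ((inner z z + 1) / eps) e) z).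
Proof.
have hQ := inner_ge0 z; set t := (inner z z + 1) / eps.
have ht : 0 < t by apply: Rdiv_lt_0_compat; lra.
have hte : / t * (inner z z + 1) = eps by rewrite /t; field; lra.
have -> : vsub (vscale t e) z = vscale t (vsub e (vscale (/ t) z)) by vec_field.
apply: hKscale; first lra.
apply: hball; have -> : vsub (vsub e (vscale (/ t) z)) e = vscale (- / t) z by vec_field.
rewrite inner_scalel inner_scaler -hte.
have := Rinv_0_lt_compat _ ht; nra.
Qed.

Lemma lambda_feasible_bound z t : K (vsub z (vscale t e)) -> t <= (inner z z + 1) / eps.
Proof.
move=> hz; apply: Rnot_lt_le => hlt; apply: (not_cone_neg_e (t := t - (inner z z + 1) / eps)); first lra.
have -> : vscale (- (t - (inner z z + 1) / eps)) e =
  vadd (vsub z (vscale t e)) (vsub (vscale ((inner z z + 1) / eps) e) z) by vec_field.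
by apply: hKadd hz (cone_absorbs z).
Qed.

Lemma lambda_sup_lub z : is_lub (fun t => K (vsub z (vscale t e))) (lambda_sup K e z).
Proof.
apply: epsilon_spec.
have bounded : bound (fun t => K (vsub z (vscale t e))).
  by exists ((inner z z + 1) / eps) => t; exact: lambda_feasible_bound.
have nonempty : exists t, K (vsub z (vscale t e)).
  exists (- ((inner (vopp z) (vopp z) + 1) / eps)).
  have -> : vsub z (vscale (- ((inner (vopp z) (vopp z) + 1) / eps)) e) =
    vsub (vscale ((inner (vopp z) (vopp z) + 1) / eps) e) (vopp z) by vec_field.
  exact: cone_absorbs.
by have [l hl] := completeness _ bounded nonempty; exists l.
Qed.

Lemma lambda_sup_ge z t : K (vsub z (vscale t e)) -> t <= lambda_sup K e z.
Proof. exact: (proj1 (lambda_sup_lub z)). Qed.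

Lemma lambda_sup_least z b :
  (forall t, K (vsub z (vscale t e)) -> t <= b) -> lambda_sup K e z <= b.
Proof. exact: (proj2 (lambda_sup_lub z)). Qed.

Lemma lambda_sup_superadd a b : lambda_sup K e a + lambda_sup K e b <= lambda_sup K e (vadd a b).
Proof.
suff : lambda_sup K e a <= lambda_sup K e (vadd a b) - lambda_sup K e b by lra.
apply: lambda_sup_least => ta hta.
suff : lambda_sup K e b <= lambda_sup K e (vadd a b) - ta by lra.
apply: lambda_sup_least => tb htb.
suff : ta + tb <= lambda_sup K e (vadd a b) by lra.
apply: lambda_sup_ge.
have -> : vsub (vadd a b) (vscale (ta + tb) e) = vadd (vsub a (vscale ta e)) (vsub b (vscale tb e))
  by vec_field.
exact: hKadd.
Qed.

Lemma lambda_sup_scale r a : 0 < r -> lambda_sup K e (vscale r a) = r * lambda_sup K e a.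
Proof.
move=> hr; have hr' := Rinv_0_lt_compat _ hr; apply: Rle_antisym.
  apply: lambda_sup_least => t ht.
  suff : t / r <= lambda_sup K e a.
    by move/(Rmult_le_compat_l r _ _ (Rlt_le _ _ hr)); rewrite /Rdiv Rmult_comm Rmult_assoc Rinv_l; lra.
  apply: lambda_sup_ge.
  have -> : vsub a (vscale (t / r) e) = vscale (/ r) (vsub (vscale r a) (vscale t e)) by vec_field.
  by apply: hKscale ht; lra.
suff : lambda_sup K e a <= / r * lambda_sup K e (vscale r a).
  by move/(Rmult_le_compat_l r _ _ (Rlt_le _ _ hr)); rewrite -Rmult_assoc Rinv_r; lra.
apply: lambda_sup_least => t ht.
suff : r * t <= lambda_sup K e (vscale r a).
  by move/(Rmult_le_compat_l (/ r) _ _ (Rlt_le _ _ hr')); rewrite -Rmult_assoc Rinv_l; lra.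
apply: lambda_sup_ge.
have -> : vsub (vscale r a) (vscale (r * t) e) = vscale r (vsub a (vscale t e)) by vec_field.
by apply: hKscale ht; lra.
Qed.

Lemma lambda_minorant_DeltaK u : (forall z, lambda_sup K e z <= inner u z) -> DeltaK K e u.
Proof.
move=> hu; have feasible0 z : K z -> 0 <= lambda_sup K e z.
  by move=> hz; apply: lambda_sup_ge; have -> : vsub z (vscale 0 e) = z by vec_field.
split; first by move=> x /feasible0 hx; have := hu x; lra.
have he : 1 <= lambda_sup K e e.
  apply: lambda_sup_ge; have -> : vsub e (vscale 1 e) = vzero by vec_field.
  exact: cone0.
have hme : -1 <= lambda_sup K e (vopp e).
  apply: lambda_sup_ge; have -> : vsub (vopp e) (vscale (-1) e) = vzero by vec_field.
  exact: cone0.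
by have := hu e; have := hu (vopp e); rewrite inner_oppr; lra.
Qed.

Lemma enorm_e : enorm_is K e e 1.
Proof.
split.
  split; first lra; split.
    have -> : vadd e (vscale 1 e) = vscale 2 e by vec_field.
    by apply: hKscale cone_e; lra.
  have -> : vadd (vopp e) (vscale 1 e) = vzero by vec_field.
  exact: cone0.
move=> a [_ [_ ha]]; apply: Rnot_lt_le => hlt; apply: (not_cone_neg_e (t := 1 - a)); first lra.
by have <- : vadd (vopp e) (vscale a e) = vscale (- (1 - a)) e by vec_field.
Qed.

Lemma dual_enorm_inner u : dual_cone K u -> dual_enorm_is K e u (inner u e).
Proof.
move=> hu; split; first by exists e; split => //; exact: enorm_e.
move=> s [x [[[_ [_ hx]] _] ->]]; have := hu _ hx.
by rewrite inner_addr inner_oppr inner_scaler; lra.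
Qed.

Section Duality.
Variables (m : nat) (N : vec n -> R) (b : 'I_m -> vec n) (L : vec n -> Prop).
Hypotheses (hN : IsNorm N) (hKclosed : is_closed K) (hb : lin_indep b)
  (hL : forall x, L x <-> exists c, x = lincomb c b).

Lemma L_subspace : subspace L.
Proof.
split; [|split].
- by apply/hL; exists vzero; rewrite lincomb0.
- by move=> _ _ /hL [c1 ->] /hL [c2 ->]; apply/hL; exists (vadd c1 c2); rewrite lincomb_add.
- by move=> r _ /hL [c ->]; apply/hL; exists (vscale r c); rewrite lincomb_scale.
Qed.

Lemma lambda_max_attained : exists v x0, L x0 /\ N x0 <= 1 /\ K (vsub x0 (vscale v e)) /\
  forall x t, L x -> N x <= 1 -> K (vsub x (vscale t e)) -> t <= v.
Proof.
have [al [hal hcoord]] := norm_coord_lower_bound (norm_lincomb_isnorm hN hb).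
pose beta i := \big[Rplus/0]_(j < m) (/ al * Rabs (b j i)).
pose S c t := N (lincomb c b) <= 1 /\ K (vsub (lincomb c b) (vscale t e)).
have [c0 [v [[hNc0 hKc0] hmax]]] : exists c0 v, S c0 v /\ forall c t, S c t -> t <= v.
  apply: (sup_attained (B := / al) (T := (\big[Rplus/0]_(i < n) (beta i * beta i) + 1) / eps)).
  - move=> c t [hNc hKc]; have hc j : Rabs (c j) <= / al.
      apply: (Rmult_le_reg_l al) => //; rewrite Rinv_r; last lra.
      by have := hcoord c j; lra.
    split => //; apply: Rle_trans (lambda_feasible_bound hKc) _.
    apply: Rmult_le_compat_r; first by apply: Rlt_le; apply: Rinv_0_lt_compat.
    apply: Rplus_le_compat_r; apply: Rle_sum => i.
    have hx : Rabs (lincomb c b i) <= beta i.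
      apply: Rle_trans (Rabs_sum _) _; apply: Rle_sum => j.
      by rewrite Rabs_mult; apply: Rmult_le_compat_r; [exact: Rabs_pos | exact: hc].
    have := Rabs_pos (lincomb c b i); rewrite -(Rabs_pos_eq (_ * _)); last exact: Rle_0_sqr.
    by rewrite Rabs_mult; nra.
  - exists vzero, 0; split; first by rewrite lincomb0 (norm0 hN); lra.
    have -> : vsub (lincomb vzero b) (vscale 0 e) = vzero by rewrite lincomb0; vec_field.
    exact: cone0.
  - move=> cs ts c t hS hcv hts; split.
      apply: Rle_cv_lim (fun k => proj1 (hS k)) (norm_continuous hN (lincomb_cv b hcv)) (Un_cv_const 1).
    apply: (hKclosed (fun k => proj2 (hS k))) => i.
    by apply: CV_minus; [exact: lincomb_cv | apply: CV_mult => //; exact: Un_cv_const].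
exists v, (lincomb c0 b); split; first by apply/hL; exists c0.
do 2!split => //.
by move=> x t /hL [c ->] hNx hKx; exact: hmax (conj hNx hKx).
Qed.

Section Certificate.
Variables (v : R) (x0 : vec n).
Hypotheses (hLx0 : L x0) (hNx0 : N x0 <= 1) (hKx0 : K (vsub x0 (vscale v e)))
  (hmax : forall x t, L x -> N x <= 1 -> K (vsub x (vscale t e)) -> t <= v).

Lemma lambda_max_ge0 : 0 <= v.
Proof.
apply: (hmax L_subspace.1); first by rewrite (norm0 hN); lra.
have -> : vsub vzero (vscale 0 e) = vzero by vec_field.
exact: cone0.
Qed.

Lemma lambda_le_norm x t : L x -> K (vsub x (vscale t e)) -> t <= v * N x.
Proof.
move=> hx hKx; have [hNx | hNx] := Rle_lt_or_eq_dec _ _ (norm_ge0 hN x); last first.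
  rewrite -hNx Rmult_0_r; apply: Rnot_lt_le => ht; apply: (not_cone_neg_e ht).
  have -> : vscale (- t) e = vsub x (vscale t e) by rewrite (norm_eq0 hN (esym hNx)); vec_field.
  exact: hKx.
have hinv := Rinv_0_lt_compat _ hNx.
suff : t / N x <= v.
  by move/(Rmult_le_compat_r (N x) _ _ (Rlt_le _ _ hNx)); rewrite /Rdiv Rmult_assoc Rinv_l; lra.
apply: (hmax (x := vscale (/ N x) x)); first exact: L_subspace.2.2.
  by rewrite (normZ hN) Rabs_right; [rewrite Rinv_l; lra | lra].
have -> : vsub (vscale (/ N x) x) (vscale (t / N x) e) = vscale (/ N x) (vsub x (vscale t e))
  by vec_field.
by apply: hKscale hKx; lra.
Qed.

Lemma lambda_max_norm : 0 < v -> N x0 = 1.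
Proof. by move=> hv; have := lambda_le_norm hLx0 hKx0; nra. Qed.

Lemma lambda_max_value : IsMax (fun t => exists x, L x /\ N x <= 1 /\ lambda_is K e x t) v.
Proof.
split; first by exists x0; do 2!split => //; split => // s; exact: hmax.
by move=> t [x [hx [hNx [hKx _]]]]; exact: hmax hKx.
Qed.

(* Hahn-Banach on [V x V] for [(a, c) |-> v N c - lambda_sup a], which is nonnegative on the
   diagonal of [L]; the dominated functional [(-u, w)] vanishes there. *)
Lemma dual_certificate : exists u w, DeltaK K e u /\ (forall z, inner w z <= v * N z) /\
  (forall x, L x -> inner u x = inner w x).
Proof.
pose P (z : vec (n + n)) := v * N (vsnd z) - lambda_sup K e (vfst z).
pose M (z : vec (n + n)) := L (vfst z) /\ vsnd z = vfst z.
have hv := lambda_max_ge0.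
have hP : sublinear P.
  split => [a c | r a hr]; rewrite /P.
    have := lambda_sup_superadd (vfst a) (vfst c); have := norm_tri N hN (vsnd a) (vsnd c).
    by rewrite /vadd /vfst /vsnd; nra.
  rewrite (_ : vfst (vscale r a) = vscale r (vfst a)) // (_ : vsnd (vscale r a) = vscale r (vsnd a)) //.
  by rewrite lambda_sup_scale // (normZ hN) Rabs_right; [ring | lra].
have hM : subspace M.
  have [L0 [Ladd Lscale]] := L_subspace.
  split; [|split]; first by split.
    move=> a c [ha ea] [hc ec]; split; first exact: Ladd.
    by change (vadd (vsnd a) (vsnd c) = vadd (vfst a) (vfst c)); rewrite ea ec.
  move=> r a [ha ea]; split; first exact: Lscale.
  by change (vscale r (vsnd a) = vscale r (vfst a)); rewrite ea.
have hlin : linear_on M (fun _ => 0) by split => *; ring.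
have hdom : dominated P M (fun _ => 0).
  move=> z [hz ez]; rewrite /P ez.
  suff : lambda_sup K e (vfst z) <= v * N (vfst z) by lra.
  by apply: lambda_sup_least => t; exact: lambda_le_norm.
have [W [hWP hWM]] := hahn_banach hP hM hlin hdom.
exists (vopp (vfst W)), (vsnd W); split; [|split].
- apply: lambda_minorant_DeltaK => a; have := hWP (vpair a vzero).
  by rewrite inner_pair /P !vfst_pair !vsnd_pair (norm0 hN) inner0r inner_oppl; lra.
- move=> c; have := hWP (vpair vzero c).
  rewrite inner_pair /P !vfst_pair !vsnd_pair inner0r.
  suff : 0 <= lambda_sup K e vzero by lra.
  apply: lambda_sup_ge; have -> : vsub vzero (vscale 0 e) = vzero by vec_field.
  exact: cone0.
- move=> x hx; have hMx : M (vpair x x) by split; rewrite ?vfst_pair ?vsnd_pair.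
  by have := hWM _ hMx; rewrite inner_pair !vfst_pair !vsnd_pair inner_oppl; lra.
Qed.

Section Values.
Variables (u w : vec n).
Hypotheses (hu : DeltaK K e u) (hw : forall z, inner w z <= v * N z)
  (huw : forall x, L x -> inner u x = inner w x).

Lemma certificate_le x : L x -> N x <= 1 -> inner u x <= v.
Proof. by move=> hx hNx; rewrite huw //; have := hw x; have := lambda_max_ge0; nra. Qed.

Lemma certificate_x0 : inner u x0 = v.
Proof. by apply: Rle_antisym; [exact: certificate_le | exact: DeltaK_lambda_le hu hKx0]. Qed.

Lemma minmax_value : IsMin (fun t => exists u', DeltaK K e u' /\
    IsMax (fun s => exists x, L x /\ N x <= 1 /\ s = inner x u') t) v.
Proof.
split.
  exists u; split => //; split; first by exists x0; do 2!split => //; rewrite inner_sym certificate_x0.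
  by move=> s [x [hx [hNx ->]]]; rewrite inner_sym; exact: certificate_le.
move=> t [u' [hu' [_ hmax']]]; apply: Rle_trans (hmax' _ (ex_intro _ x0 (conj hLx0 (conj hNx0 erefl)))).
by rewrite inner_sym; exact: DeltaK_lambda_le hu' hKx0.
Qed.

Lemma maxmin_value : IsMax (fun t => exists x, L x /\ N x <= 1 /\
    IsMin (fun s => exists u', DeltaK K e u' /\ s = inner x u') t) v.
Proof.
split.
  exists x0; do 2!split => //; split; first by exists u; split => //; rewrite inner_sym certificate_x0.
  by move=> s [u' [hu' ->]]; rewrite inner_sym; exact: DeltaK_lambda_le hu' hKx0.
move=> t [x [hx [hNx [_ hmin]]]]; apply: Rle_trans (hmin _ (ex_intro _ u (conj hu erefl))) _.
by rewrite inner_sym; exact: certificate_le.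
Qed.

Lemma nu_value : IsMin (nu_set N K e L) v.
Proof.
split.
  exists u, (vsub u w); split; first exact: hu.1.
  split; first by move=> x hx; rewrite inner_subl huw //; ring.
  split; first by rewrite -hu.2; exact: dual_enorm_inner hu.1.
  have -> : vsub (vsub u w) u = vopp w by vec_field.
  have [x1 [hNx1 hx1]] : exists x1, N x1 = 1 /\ inner (vopp w) x1 = v.
    have [hv | hv] := Rle_lt_or_eq_dec _ _ lambda_max_ge0.
      exists (vopp x0); rewrite (norm_opp hN) lambda_max_norm // inner_oppl inner_oppr.
      by rewrite Ropp_involutive -huw // certificate_x0.
    have [x1 hx1] := norm1_exists hN i0; exists x1; split => //.
    by have := hw x1; have := hw (vopp x1); rewrite inner_oppr (norm_opp hN) inner_oppl -hv; lra.
  apply: dual_norm_of_bound hNx1 hx1 => x.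
  by have := hw (vopp x); rewrite inner_oppl inner_oppr (norm_opp hN); lra.
move=> t [u' [y' [hu' [hy' [hen hdn]]]]].
have hu'e : inner u' e = 1 := IsMax_unique (dual_enorm_inner hu') hen.
have := dual_norm_bound hN (vopp x0) hdn; have := dual_norm_ge0 hN hdn.
rewrite inner_subl !inner_oppr hy' // (norm_opp hN).
have := DeltaK_lambda_le (conj hu' hu'e) hKx0; have := norm_ge0 hN x0; nra.
Qed.

End Values.

End Certificate.

Theorem duality : exists v : R,
    IsMin (nu_set N K e L) v /\
    IsMin (fun t => exists u, DeltaK K e u /\
             IsMax (fun s => exists x, L x /\ N x <= 1 /\ s = inner x u) t) v /\
    IsMax (fun t => exists x, L x /\ N x <= 1 /\
             IsMin (fun s => exists u, DeltaK K e u /\ s = inner x u) t) v /\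
    IsMax (fun t => exists x, L x /\ N x <= 1 /\ lambda_is K e x t) v.
Proof.
have [v [x0 [hLx0 [hNx0 [hKx0 hmax]]]]] := lambda_max_attained.
have [u [w [hu [hw huw]]]] := dual_certificate hmax.
exists v; split; first exact: (nu_value hLx0 hNx0 hKx0 hmax hu hw huw).
split; first exact: (minmax_value hLx0 hNx0 hKx0 hmax hu hw huw).
split; first exact: (maxmin_value hLx0 hNx0 hKx0 hmax hu hw huw).
exact: (lambda_max_value hLx0 hNx0 hKx0 hmax).
Qed.

End Duality.
End ConeInterior.

Theorem mainTheorem7 (n m : nat) (N : vec n -> R) (K : vec n -> Prop) (e : vec n)
  (hm1 : leq 1 m) (hmn : leq (S m) n)
  (hN : IsNorm N)
  (hK : regular_closed_convex_cone K)
  (he : in_interior K e) :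
  forall L : vec n -> Prop, in_Gr m L ->
  exists v : R,
    IsMin (nu_set N K e L) v /\
    IsMin (fun t => exists u, DeltaK K e u /\
             IsMax (fun s => exists x, L x /\ N x <= 1 /\ s = inner x u) t) v /\
    IsMax (fun t => exists x, L x /\ N x <= 1 /\
             IsMin (fun s => exists u, DeltaK K e u /\ s = inner x u) t) v /\
    IsMax (fun t => exists x, L x /\ N x <= 1 /\ lambda_is K e x t) v.
Proof.
move=> L [b [hb hLb]].
have [hKclosed [[_ [hKadd hKscale]] [hKpointed _]]] := hK.
have [eps [heps hball]] := he.
pose i0 : 'I_n := Ordinal (leq_trans (ltn0Sn m) hmn).
have hL x : L x <-> exists c, x = lincomb c b.
  by split=> [/hLb [c /veqE ->] | [c ->]]; [exists c | apply/hLb; exists c].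
exact: (duality i0 hKadd hKscale hKpointed heps hball hN hKclosed hb hL).
Qed.
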